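(* Let $2\le 2k<n$ and let $v=v(t)>0$ be a smooth function on $\mathbb R$, viewed as a function on $\mathbb R\times\mathbb S^{n-1}$, and set $g_v=v^{4k/(n-2k)}g_{cyl}$ and $h(t)=v(t)^2-\big(\frac{2k}{n-2k}\big)^2\dot v(t)^2$. Assume $h_0:=h(0)>0$. Then $v$ solves $\sigma_k(B_{g_v})=0$ on $\mathbb R\times\mathbb S^{n-1}$ if and only if $v(t)=\sqrt{h_0}\cosh\big(\frac{n-2k}{2k}t-c\big)$ for some $c\in\mathbb R$.
   Context: $g_{cyl}=dt^2+d\theta^2$ is the product metric on $\mathbb R\times\mathbb S^{n-1}$ with $d\theta^2$ the round metric. For a metric $g$, $A_g=\frac1{n-2}(\mathrm{Ric}_g-\frac{R_g}{2(n-1)}g)$ is its Schouten tensor, and $B_{g_v}=\frac{n-2k}{2k}v^{2n/(n-2k)}g_v^{-1}A_{g_v}$ (a symmetric endomorphism); $\sigma_k$ denotes the $k$-th elementary symmetric function of its eigenvalues. *)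

From Stdlib Require Import Reals Lra List ClassicalEpsilon.
Import ListNotations.
Open Scope R_scope.

Fixpoint sumR (n : nat) (f : nat -> R) : R :=
  match n with O => 0 | S m => sumR m f + f m end.

(* derivative of f : R -> R at t (the unique l with derivable_pt_lim f t l
   when f is differentiable at t; an arbitrary value otherwise) *)
Definition der (f : R -> R) (t : R) : R :=
  epsilon (inhabits 0) (fun l => derivable_pt_lim f t l).

Definition smooth (v : R -> R) : Prop :=
  exists D : nat -> R -> R,
    D O = v /\ forall m t, derivable_pt_lim (D m) t (D (S m) t).

(* points of R^n : only the coordinates 0..n-1 are used *)
Definition vec := nat -> R.
Definition upd (x : vec) (i : nat) (s : R) : vec :=
  fun j => if Nat.eqb j i then s else x j.

Definition pd (i : nat) (F : vec -> R) (x : vec) : R :=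
  der (fun s => F (upd x i s)) (x i).

Definition normsq (n : nat) (x : vec) : R := sumR n (fun i => x i ^ 2).

Definition mat := nat -> nat -> R.

(* determinant of the submatrix with rows [rows] and columns [cols]
   (Laplace expansion along the first row) *)
Fixpoint detl (M : mat) (rows cols : list nat) {struct rows} : R :=
  match rows with
  | nil => 1
  | r :: rs =>
      (fix go (pre post : list nat) (sgn : R) {struct post} : R :=
         match post with
         | nil => 0
         | c :: post' =>
             sgn * M r c * detl M rs (pre ++ post') + go (pre ++ [c]) post' (- sgn)
         end) nil cols 1
  end.

Definition idx (n : nat) : list nat := seq 0 n.
Definition idx_wo (n j : nat) : list nat :=
  filter (fun a => negb (Nat.eqb a j)) (seq 0 n).

Definition det (n : nat) (M : mat) : R := detl M (idx n) (idx n).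

Definition minv (n : nat) (M : mat) : mat :=
  fun i j => (-1) ^ (i + j) * detl M (idx_wo n j) (idx_wo n i) / det n M.

Fixpoint subsets (k : nat) (l : list nat) : list (list nat) :=
  match k, l with
  | O, _ => [nil]
  | S _, nil => nil
  | S k', a :: l' => map (cons a) (subsets k' l') ++ subsets k l'
  end.

(* sigma_k of the eigenvalues of the endomorphism M of R^n, i.e. the sum of
   its principal k x k minors (the coefficient of s^k in det(I + s M)) *)
Definition sigmak (n k : nat) (M : mat) : R :=
  fold_right (fun S acc => detl M S S + acc) 0 (subsets k (idx n)).

Definition metric := vec -> mat.

Definition Gam (n : nat) (g : metric) (x : vec) (m i j : nat) : R :=
  / 2 * sumR n (fun l => minv n (g x) m l *
     (pd i (fun y => g y j l) x + pd j (fun y => g y i l) x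
      - pd l (fun y => g y i j) x)).

Definition Ric (n : nat) (g : metric) (x : vec) (i j : nat) : R :=
  sumR n (fun m =>
    pd m (fun y => Gam n g y m i j) x - pd j (fun y => Gam n g y m i m) x
    + sumR n (fun l => Gam n g x m m l * Gam n g x l i j
                       - Gam n g x m j l * Gam n g x l i m)).

Definition Scal (n : nat) (g : metric) (x : vec) : R :=
  sumR n (fun i => sumR n (fun j => minv n (g x) i j * Ric n g x i j)).

Definition Schouten (n : nat) (g : metric) (x : vec) (i j : nat) : R :=
  / (INR n - 2) * (Ric n g x i j - Scal n g x / (2 * (INR n - 1)) * g x i j).

(* We use the global chart R^n \ {0} of the cylinder given by
   (t, theta) |-> e^t theta; in it g_cyl = dt^2 + dtheta^2 = |x|^{-2} delta,
   and t = ln |x|. *)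
Definition tcoord (n : nat) (x : vec) : R := ln (sqrt (normsq n x)).

Definition gcyl (n : nat) : metric :=
  fun x i j => if Nat.eqb i j then / normsq n x else 0.

Definition gv (n k : nat) (v : R -> R) : metric :=
  fun x i j =>
    Rpower (v (tcoord n x)) (4 * INR k / (INR n - 2 * INR k)) * gcyl n x i j.

Definition Bv (n k : nat) (v : R -> R) (x : vec) : mat :=
  fun i j =>
    (INR n - 2 * INR k) / (2 * INR k)
    * Rpower (v (tcoord n x)) (2 * INR n / (INR n - 2 * INR k))
    * sumR n (fun l => minv n (gv n k v x) i l * Schouten n (gv n k v) x l j).

Definition hfun (n k : nat) (v : R -> R) (t : R) : R :=
  v t ^ 2 - (2 * INR k / (INR n - 2 * INR k)) ^ 2 * der v t ^ 2.

(* In the chart [x = e^t theta] of the cylinder, [g_v = Phi(|x|^2) delta] with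
   [Phi(r) = v(ln sqrt r)^(4k/(n-2k)) / r].  For any such radial conformal factor the
   Christoffel symbols are explicit and [g^-1 A_g] is a combination of [I] and [x x^T];
   for [g_v] one finds [B_{g_v} = lambda I + mu x x^T] with [lambda = alpha h(t) / 2] and [(n/k) lambda + mu |x|^2 = v (alpha^2 v - v'')],
   where [alpha = (n-2k)/(2k)].  By the matrix determinant lemma the principal minors
   of [lambda I + mu x x^T] are explicit, which gives
     [sigma_k(B_{g_v}) = C(n-1,k-1) (alpha h/2)^(k-1) v (alpha^2 v - v'')].
   So where [h > 0] the equation is [v'' = alpha^2 v], hence [h' = 2 v' (v - v''/alpha^2)]
   vanishes; a continuity argument propagates [h = h(0) > 0] to all of [R], and the
   linear ODE [v'' = alpha^2 v] integrates to [sqrt h(0) cosh(alpha t - c)].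
   Conversely that function has [h = h(0)] and solves [v'' = alpha^2 v]. *)

From Stdlib Require Import Reals Lra Lia List Classical ClassicalEpsilon FunctionalExtensionality.
From Coquelicot Require Import Coquelicot.
From mathcomp Require all_boot all_algebra Rstruct.
Import ListNotations.
Open Scope R_scope.

Definition kron (i j : nat) : R := if Nat.eqb i j then 1 else 0.

Lemma kron_refl i : kron i i = 1.
Proof. unfold kron; rewrite Nat.eqb_refl; reflexivity. Qed.

Lemma kron_sym i j : kron i j = kron j i.
Proof. unfold kron; rewrite Nat.eqb_sym; reflexivity. Qed.

Lemma sumR_ext m f g : (forall j, (j < m)%nat -> f j = g j) -> sumR m f = sumR m g.
Proof.
  induction m; intros H; simpl; auto.
  rewrite IHm by (intros; apply H; lia); rewrite H by lia; reflexivity.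
Qed.

Lemma sumR_recl m f : sumR (S m) f = f O + sumR m (fun j => f (S j)).
Proof. induction m; simpl in *; [|rewrite IHm]; ring. Qed.

Lemma sumR_add m f g : sumR m (fun j => f j + g j) = sumR m f + sumR m g.
Proof. induction m; simpl; [|rewrite IHm]; ring. Qed.

Lemma sumR_sub m f g : sumR m (fun j => f j - g j) = sumR m f - sumR m g.
Proof. induction m; simpl; [|rewrite IHm]; ring. Qed.

Lemma sumR_mull m c f : sumR m (fun j => c * f j) = c * sumR m f.
Proof. induction m; simpl; [|rewrite IHm]; ring. Qed.

Lemma sumR_const m c : sumR m (fun _ => c) = INR m * c.
Proof. induction m; [simpl; ring|]. rewrite S_INR; simpl; rewrite IHm; ring. Qed.

Lemma sumR_kron_l m a f : (a < m)%nat -> sumR m (fun l => kron a l * f l) = f a.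
Proof.
  intros Ha. induction m as [|m IH]; [lia|]. simpl.
  destruct (Nat.eq_dec a m) as [->|Hne].
  - rewrite (sumR_ext _ _ (fun _ => 0)), sumR_const, kron_refl; [ring|].
    intros j Hj; unfold kron; rewrite (proj2 (Nat.eqb_neq m j)) by lia; ring.
  - rewrite IH by lia; unfold kron; rewrite (proj2 (Nat.eqb_neq a m)) by lia; ring.
Qed.

Lemma sumR_kron_r m a f : (a < m)%nat -> sumR m (fun l => kron l a * f l) = f a.
Proof.
  intros Ha; rewrite <- (sumR_kron_l m a f Ha).
  apply sumR_ext; intros; rewrite kron_sym; reflexivity.
Qed.

(** * Determinants of submatrices *)

Fixpoint rem_nth (j : nat) (l : list nat) : list nat :=
  match l with
  | nil => nil
  | a :: l' => match j with O => l' | S j' => a :: rem_nth j' l' end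
  end.

Lemma In_rem_nth j l c : In c (rem_nth j l) -> In c l.
Proof.
  revert j; induction l as [|a l IH]; intros [|j] H; simpl in *; auto.
  destruct H; eauto.
Qed.

Lemma length_rem_nth j l : (j < length l)%nat -> length (rem_nth j l) = pred (length l).
Proof.
  revert j; induction l as [|a l IH]; intros [|j] H; simpl in *; try lia; auto.
  rewrite IH by lia; destruct l; simpl in *; lia.
Qed.

Lemma nth_rem_nth j l i :
  nth i (rem_nth j l) 0%nat = nth (if (i <? j)%nat then i else S i) l 0%nat.
Proof.
  revert j i; induction l as [|a l IH]; intros j i.
  - destruct j, (i <? _)%nat, i; reflexivity.
  - destruct j as [|j], i as [|i]; simpl; auto.
    rewrite IH; destruct (Nat.ltb_spec i j), (Nat.ltb_spec (S i) (S j)); try lia; reflexivity.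
Qed.

(* The inner fixpoint of [detl]: Laplace expansion along the first row. *)
Definition laplace_row (f : list nat -> R) (a : nat -> R) :=
  fix go (pre post : list nat) (sgn : R) {struct post} : R :=
  match post with
  | nil => 0
  | c :: post' => sgn * a c * f (pre ++ post') + go (pre ++ [c]) post' (- sgn)
  end.

Lemma detl_cons M r rs cols :
  detl M (r :: rs) cols = laplace_row (detl M rs) (M r) nil cols 1.
Proof. reflexivity. Qed.

Lemma laplace_rowE f a post : forall pre sgn,
  laplace_row f a pre post sgn =
  sgn * sumR (length post)
          (fun j => (-1) ^ j * a (nth j post 0%nat) * f (pre ++ rem_nth j post)).
Proof.
  induction post as [|c cs IH]; intros pre sgn; [simpl; ring|].
  change (laplace_row f a pre (c :: cs) sgn) with
    (sgn * a c * f (pre ++ cs) + laplace_row f a (pre ++ [c]) cs (- sgn)).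
  change (length (c :: cs)) with (S (length cs)).
  rewrite sumR_recl, IH, Rmult_plus_distr_l, <- !sumR_mull.
  simpl; f_equal; [ring|].
  apply sumR_ext; intros j _; rewrite <- app_assoc; simpl; ring.
Qed.

Lemma detl_zero_row M rows : forall cols r, In r rows ->
  (forall c, In c cols -> M r c = 0) -> detl M rows cols = 0.
Proof.
  induction rows as [|r' rs IH]; intros cols r Hr Hc; [destruct Hr|].
  rewrite detl_cons, laplace_rowE, Rmult_1_l,
    (sumR_ext _ _ (fun _ => 0)), sumR_const; [ring|].
  intros j Hj; destruct Hr as [<-|Hr].
  - rewrite Hc by (apply nth_In; auto); ring.
  - rewrite (IH _ r Hr); [ring|].
    intros c Hc'; apply Hc, (In_rem_nth j); auto.
Qed.

Lemma detl_ext M M' rows : forall cols,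
  (forall r c, In r rows -> In c cols -> M r c = M' r c) ->
  detl M rows cols = detl M' rows cols.
Proof.
  induction rows as [|r rs IH]; intros cols H; [reflexivity|].
  rewrite !detl_cons, !laplace_rowE; f_equal; apply sumR_ext; intros j Hj.
  rewrite H, (IH (nil ++ rem_nth j cols)); auto using nth_In; [|now left].
  intros r0 c Hr Hc; apply H; [now right|]; apply (In_rem_nth j); auto.
Qed.

Module MatrixDet.
Import all_boot all_algebra Rstruct.
Import GRing.Theory.
Local Open Scope ring_scope.

Lemma sumR_big m (F : nat -> R) : sumR m F = \sum_(j < m) F j.
Proof. by elim: m => [|m IH]; rewrite ?big_ord0 // big_ord_recr /= IH. Qed.

Definition submx (M : mat) (rows cols : list nat) m : 'M[R]_m :=
  \matrix_(i < m, j < m) M (List.nth i rows 0%N) (List.nth j cols 0%N).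

Lemma detl_det M rows : forall cols, length rows = length cols ->
  detl M rows cols = \det (submx M rows cols (length rows)).
Proof.
  elim: rows => [|r rs IH] cols Hl; first by rewrite det_mx00.
  rewrite detl_cons laplace_rowE (expand_det_row _ ord0) Rmult_1_l -Hl sumR_big.
  apply: eq_bigr => j _.
  have Hs : length rs = length (rem_nth j cols).
    by rewrite length_rem_nth -?Hl //; apply/ltP.
  rewrite /cofactor RpowE (IH _ Hs) /= !mxE.
  have -> : submx M rs (rem_nth j cols) (length rs)
            = row' ord0 (col' j (submx M (r :: rs) cols (length rs).+1)).
    apply/matrixP => a b; rewrite !mxE /= nth_rem_nth /bump.
    case: (Nat.ltb_spec b j) => Hb.
    - have -> : (j <= b)%N = false by apply/negbTE; rewrite -ltnNge; apply/ltP.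
      by rewrite add0n.
    - have -> : (j <= b)%N = true by apply/leP; lia.
      by rewrite add1n.
  by rewrite !RmultE add0n mulrCA mulrA.
Qed.

(* Schur complements of the block matrix [[1, -nu c^T], [c, 1]] in both orders. *)
Lemma det1_rank1 m (nu : R) (c : 'cV[R]_m) :
  \det (1%:M + nu *: (c *m c^T)) = 1 + nu * (c^T *m c) 0 0.
Proof.
  set P := block_mx (1%:M : 'M[R]_1) (- (nu *: c^T)) c (1%:M : 'M[R]_m).
  have E1 : P = block_mx 1%:M 0 c 1%:M
                *m block_mx 1%:M (- (nu *: c^T)) 0 (1%:M + nu *: (c *m c^T)).
    rewrite mulmx_block !mulmx1 !mul1mx ?mulmx0 ?mul0mx ?addr0 ?add0r.
    by rewrite mulmxN scalemxAr addrCA addNr addr0.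
  have E2 : P = block_mx (1%:M + nu *: (c^T *m c)) (- (nu *: c^T)) 0 1%:M
                *m block_mx 1%:M 0 c 1%:M.
    rewrite mulmx_block !mulmx1 !mul1mx ?mulmx0 ?mul0mx ?addr0 ?add0r.
    by rewrite mulNmx scalemxAl addrK.
  have := congr1 determinant E1; rewrite E2 !det_mulmx !det_lblock !det_ublock.
  rewrite !det1 !mul1r ?mulr1 => <-.
  by rewrite det_mx11 !mxE /= mulr1n.
Qed.

Local Close Scope ring_scope.

Lemma detl_scalar_rank1 (lam mu : R) (u : nat -> R) (S : list nat) :
  List.NoDup S -> lam <> 0 ->
  detl (fun i j => (if Nat.eqb i j then lam else 0) + mu * u i * u j) S S
  = lam ^ length S * (1 + mu / lam * sumR (length S) (fun i => u (List.nth i S 0%N) ^ 2)).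
Proof.
  Local Open Scope ring_scope.
  move=> HS Hl; rewrite detl_det //.
  set m := length S.
  set c : 'cV[R]_m := \col_(i < m) u (List.nth i S 0%N).
  have -> : submx (fun i j => ((if Nat.eqb i j then lam else 0) + mu * u i * u j)%R) S S m
            = lam *: (1%:M + (mu / lam) *: (c *m c^T)).
    apply/matrixP => i j; rewrite !mxE big_ord1 !mxE.
    have -> : Nat.eqb (List.nth i S 0%N) (List.nth j S 0%N) = (i == j).
      case: (Nat.eqb_spec (List.nth i S 0%N) (List.nth j S 0%N)) => H.
      - have := proj1 (List.NoDup_nth S 0%N) HS i j (ltP (ltn_ord i)) (ltP (ltn_ord j)) H.
        by move=> /ord_inj ->; rewrite eqxx.
      - by case: eqP => // E; rewrite E in H.
    have Hl' : lam != 0 by apply/eqP.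
    rewrite ?RplusE ?RmultE mulrDr; congr (_ + _); last by rewrite mulrA (mulrC lam) divfK // mulrA.
    by case: (i == j); rewrite /= ?mulr1n ?mulr0n ?mulr1 ?mulr0.
  rewrite detZ det1_rank1 ?RpowE ?RplusE ?RmultE ?RdivE.
  congr (_ * (_ + _ * _)); rewrite mxE sumR_big; apply: eq_bigr => i _.
  by rewrite !mxE RpowE expr2.
Qed.

Local Close Scope ring_scope.

Lemma binomial_gt0 n k : (k <= n)%coq_nat -> (0 < 'C(n, k))%coq_nat.
Proof. by move=> /leP Hk; apply/ltP; rewrite bin_gt0. Qed.

Lemma INR_binomial_diag n k : (1 <= k)%coq_nat -> (k <= n)%coq_nat ->
  INR ('C(n, k)) = INR n / INR k * INR ('C(n.-1, k.-1)).
Proof.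
  case: k => [|k] Hk Hkn; first lia.
  have E := congr1 INR (mul_bin_diag n k); rewrite !mult_INR in E.
  have Hk0 : INR k.+1 <> 0 by apply: not_0_INR.
  apply: (Rmult_eq_reg_l (INR k.+1)) => //; by rewrite -E /Rdiv -Rmult_assoc -Rmult_assoc Rinv_r_simpl_m.
Qed.

End MatrixDet.

Lemma In_idx_wo n j c : In c (idx_wo n j) <-> (c < n)%nat /\ c <> j.
Proof. unfold idx_wo; rewrite filter_In, in_seq, Bool.negb_true_iff, Nat.eqb_neq; lia. Qed.

Lemma NoDup_idx_wo n j : NoDup (idx_wo n j).
Proof. apply NoDup_filter, seq_NoDup. Qed.

Lemma length_idx_wo n j : (j < n)%nat -> length (idx_wo n j) = pred n.
Proof.
  unfold idx_wo; intros Hj.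
  assert (Hkeep : forall s m, (j < s \/ s + m <= j)%nat ->
            filter (fun a => negb (a =? j)) (seq s m) = seq s m).
  { intros s m Hsm; rewrite (List.filter_ext_in _ (fun _ => true)), List.filter_true; auto.
    intros a Ha; apply in_seq in Ha; apply Bool.negb_true_iff, Nat.eqb_neq; lia. }
  replace n with (j + S (n - S j))%nat at 1 by lia.
  rewrite seq_app, filter_app; simpl; rewrite Nat.eqb_refl; simpl; rewrite !Hkeep by lia.
  rewrite length_app, !length_seq; lia.
Qed.

Lemma detl_scalar (a : R) (S : list nat) : NoDup S -> a <> 0 ->
  detl (fun r c => if Nat.eqb r c then a else 0) S S = a ^ length S.
Proof.
  intros HS Ha.
  rewrite (detl_ext _ (fun r c => (if Nat.eqb r c then a else 0) + 0 * 0 * 0))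
    by (intros; ring).
  rewrite (MatrixDet.detl_scalar_rank1 a 0 (fun _ => 0)) by auto; field; auto.
Qed.

Lemma minv_scalar n a i j : a <> 0 -> (i < n)%nat -> (j < n)%nat ->
  minv n (fun r c => if Nat.eqb r c then a else 0) i j = kron i j / a.
Proof.
  intros Ha Hi Hj; unfold minv, det, kron.
  destruct (Nat.eqb_spec i j) as [<-|Hne].
  - rewrite (detl_scalar _ (seq 0 n)), detl_scalar, length_idx_wo, length_seq
      by auto using NoDup_idx_wo, seq_NoDup.
    replace (i + i)%nat with (2 * i)%nat by lia; rewrite pow_1_even.
    destruct n as [|n]; [lia|]; simpl; field; auto using pow_nonzero.
  - rewrite (detl_zero_row _ _ _ i); [unfold Rdiv; ring| |].
    + apply In_idx_wo; lia.
    + intros c Hc; apply In_idx_wo in Hc.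
      rewrite (proj2 (Nat.eqb_neq i c)) by lia; reflexivity.
Qed.

(** * Elementary symmetric functions of a rank-one perturbation of a scalar *)

Definition sum_sq (u : nat -> R) (S : list nat) : R :=
  fold_right (fun a acc => u a ^ 2 + acc) 0 S.

Lemma length_subsets l : forall k, length (subsets k l) = binomial.binomial (length l) k.
Proof.
  induction l as [|a l IH]; intros [|k]; simpl; auto.
  rewrite length_app, length_map, !IH, Nat.add_comm; reflexivity.
Qed.

Section ListSums.
Variable A : Type.

Lemma fold_sum_ext_in (L : list A) (f g : A -> R) :
  (forall S, In S L -> f S = g S) ->
  fold_right (fun S acc => f S + acc) 0 L = fold_right (fun S acc => g S + acc) 0 L.
Proof.
  induction L; intros H; simpl; auto.
  rewrite H by (left; auto); rewrite IHL; auto.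
  intros; apply H; right; auto.
Qed.

Lemma fold_sum_app (L L' : list A) (f : A -> R) :
  fold_right (fun S acc => f S + acc) 0 (L ++ L')
  = fold_right (fun S acc => f S + acc) 0 L + fold_right (fun S acc => f S + acc) 0 L'.
Proof. induction L; simpl; [|rewrite IHL]; ring. Qed.

Lemma fold_sum_affine (L : list A) (f : A -> R) a b :
  fold_right (fun S acc => a + b * f S + acc) 0 L
  = INR (length L) * a + b * fold_right (fun S acc => f S + acc) 0 L.
Proof. induction L; simpl length; [simpl; ring|]; rewrite S_INR; simpl; rewrite IHL; ring. Qed.

Lemma fold_sum_map (B : Type) (h : B -> A) (L : list B) (f : A -> R) :
  fold_right (fun S acc => f S + acc) 0 (map h L)
  = fold_right (fun S acc => f (h S) + acc) 0 L.
Proof. induction L; simpl; [|rewrite IHL]; reflexivity. Qed.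

End ListSums.

Lemma sum_sq_subsets u l : forall k,
  fold_right (fun S acc => sum_sq u S + acc) 0 (subsets (S k) l)
  = INR (binomial.binomial (pred (length l)) k) * sum_sq u l.
Proof.
  induction l as [|a l IH]; intros k; [simpl; ring|].
  change (subsets (S k) (a :: l)) with (map (cons a) (subsets k l) ++ subsets (S k) l).
  rewrite fold_sum_app, fold_sum_map, IH.
  rewrite (fold_sum_ext_in _ _ _ (fun S => u a ^ 2 + 1 * sum_sq u S)) by (intros; simpl; ring).
  rewrite fold_sum_affine, length_subsets; simpl length; simpl pred.
  destruct k as [|k].
  - rewrite !binomial.bin0; destruct l; simpl; ring.
  - rewrite IH; destruct l as [|b l]; simpl length; cbn [pred].
    + change (binomial.binomial 0 (S k)) with 0%nat; simpl; ring.
    + rewrite binomial.binS, plus_INR; simpl; ring.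
Qed.

Lemma subsets_spec l : forall k S, NoDup l -> In S (subsets k l) ->
  NoDup S /\ length S = k /\ incl S l.
Proof.
  induction l as [|a l IH]; intros k S Hl HS.
  - destruct k; simpl in HS; [|contradiction].
    destruct HS as [<-|[]]; repeat split; auto using NoDup_nil, incl_nil_l.
  - apply NoDup_cons_iff in Hl as [Ha Hl]; destruct k; simpl in HS.
    + destruct HS as [<-|[]]; repeat split; auto using NoDup_nil, incl_nil_l.
    + apply in_app_or in HS as [HS|HS].
      * apply in_map_iff in HS as [S' [<- HS']].
        destruct (IH _ _ Hl HS') as [H1 [H2 H3]]; repeat split; simpl; auto.
        -- constructor; auto.
        -- apply incl_cons; [now left|]; apply incl_tl; auto.
      * destruct (IH _ _ Hl HS) as [H1 [H2 H3]]; repeat split; auto.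
        apply incl_tl; auto.
Qed.

Lemma sumR_nth_sum_sq u S : sumR (length S) (fun i => u (nth i S 0%nat) ^ 2) = sum_sq u S.
Proof. induction S as [|a S IH]; [reflexivity|]; simpl length; rewrite sumR_recl; cbn [nth]; rewrite IH; reflexivity. Qed.

Lemma sum_sq_seq u m : forall a, sum_sq u (seq a m) = sumR m (fun i => u (a + i)%nat ^ 2).
Proof.
  induction m; intros a; [reflexivity|].
  rewrite sumR_recl; simpl; rewrite IHm, Nat.add_0_r; f_equal.
  apply sumR_ext; intros; rewrite Nat.add_succ_r; reflexivity.
Qed.

Lemma sigmak_ext n k M M' :
  (forall i j, (i < n)%nat -> (j < n)%nat -> M i j = M' i j) -> sigmak n k M = sigmak n k M'.
Proof.
  intros H; apply fold_sum_ext_in; intros S HS.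
  destruct (subsets_spec _ _ _ (seq_NoDup n 0) HS) as [_ [_ Hinc]].
  apply detl_ext; intros r c Hr Hc.
  apply Hinc, in_seq in Hr; apply Hinc, in_seq in Hc; apply H; lia.
Qed.

Lemma sigmak_scalar_rank1 n k lam mu u : lam <> 0 -> (1 <= k)%nat ->
  sigmak n k (fun i j => (if Nat.eqb i j then lam else 0) + mu * u i * u j)
  = INR (binomial.binomial n k) * lam ^ k
    + mu * lam ^ pred k * INR (binomial.binomial (pred n) (pred k)) * sumR n (fun i => u i ^ 2).
Proof.
  intros Hl Hk; unfold sigmak.
  rewrite (fold_sum_ext_in _ _ _ (fun S => lam ^ k + mu * lam ^ pred k * sum_sq u S)).
  - destruct k as [|k]; [lia|].
    rewrite fold_sum_affine, sum_sq_subsets, length_subsets; unfold idx.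
    rewrite length_seq, sum_sq_seq; cbn [pred Nat.add]; ring.
  - intros S HS; destruct (subsets_spec _ _ _ (seq_NoDup n 0) HS) as [H1 [H2 _]].
    rewrite MatrixDet.detl_scalar_rank1, sumR_nth_sum_sq, H2 by auto.
    destruct k; [lia|]; simpl pred; simpl pow; field; auto.
Qed.

(** * Calculus *)

Lemma derivable_pt_lim_eq_val f t l l' :
  derivable_pt_lim f t l -> l = l' -> derivable_pt_lim f t l'.
Proof. intros H <-; exact H. Qed.

Lemma der_lim f t l : derivable_pt_lim f t l -> der f t = l.
Proof.
  intros H; unfold der.
  apply (uniqueness_limite f t); auto.
  apply (epsilon_spec (inhabits 0) (fun l => derivable_pt_lim f t l)); eauto.
Qed.

Lemma upd_id x a : upd x a (x a) = x.
Proof.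
  apply functional_extensionality; intros i; unfold upd.
  destruct (Nat.eqb_spec i a) as [->|]; auto.
Qed.

Lemma derivable_pt_lim_upd x a i : derivable_pt_lim (fun s => upd x a s i) (x a) (kron i a).
Proof.
  unfold upd, kron; destruct (Nat.eqb i a);
    [apply derivable_pt_lim_id|apply derivable_pt_lim_const].
Qed.

Lemma normsq_upd n x i s : (i < n)%nat -> normsq n (upd x i s) = normsq n x - x i ^ 2 + s ^ 2.
Proof.
  unfold normsq, upd; induction n as [|n IH]; intros Hi; [lia|]; cbn [sumR].
  destruct (Nat.eq_dec i n) as [->|Hne].
  - rewrite Nat.eqb_refl, (sumR_ext _ _ (fun j => x j ^ 2)); [ring|].
    intros j Hj; rewrite (proj2 (Nat.eqb_neq j n)) by lia; reflexivity.
  - rewrite IH, (proj2 (Nat.eqb_neq n i)) by lia; ring.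
Qed.

Lemma derivable_pt_lim_radial n x i Phi dPhi : (i < n)%nat ->
  derivable_pt_lim Phi (normsq n x) dPhi ->
  derivable_pt_lim (fun s => Phi (normsq n (upd x i s))) (x i) (dPhi * (2 * x i)).
Proof.
  intros Hi H.
  apply derivable_pt_lim_ext with (f := fun s => Phi (normsq n x - x i ^ 2 + s ^ 2)).
  { intros s; rewrite normsq_upd; auto. }
  apply (derivable_pt_lim_comp (fun s => normsq n x - x i ^ 2 + s ^ 2) Phi).
  - apply is_derive_Reals; auto_derive; [exact I|ring].
  - replace (normsq n x - x i ^ 2 + x i ^ 2) with (normsq n x) by ring; auto.
Qed.

Lemma continuity_pt_near f x eps : continuity_pt f x -> 0 < eps ->
  exists d, 0 < d /\ forall y, Rabs (y - x) < d -> Rabs (f y - f x) < eps.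
Proof.
  intros Hc Heps; destruct (Hc eps Heps) as [d [Hd Hy]].
  exists d; split; auto; intros y Hyd.
  destruct (Req_dec y x) as [->|Hne].
  - rewrite Rminus_diag, Rabs_R0; auto.
  - apply (Hy y); repeat split; auto.
Qed.

Lemma normsq_upd_pos_near n x a : (a < n)%nat -> 0 < normsq n x ->
  exists d, 0 < d /\ forall s, Rabs (s - x a) < d -> 0 < normsq n (upd x a s).
Proof.
  intros Ha HN.
  assert (Hc : continuity_pt (fun s => normsq n x - x a ^ 2 + s ^ 2) (x a)).
  { apply derivable_continuous_pt; exists (2 * x a).
    apply is_derive_Reals; auto_derive; [exact I|ring]. }
  destruct (continuity_pt_near _ _ _ Hc HN) as [d [Hd Hnear]].
  exists d; split; auto; intros s Hs.
  specialize (Hnear s Hs); rewrite normsq_upd by auto.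
  apply Rabs_def2 in Hnear; lra.
Qed.

Lemma const_on_interval f f' a b : a <= b ->
  (forall c, a <= c <= b -> derivable_pt_lim f c (f' c)) ->
  (forall c, a <= c <= b -> f' c = 0) -> f b = f a.
Proof.
  intros Hab Hd H0; destruct (Req_dec a b) as [->|Hne]; auto.
  destruct (MVT_cor2 f f' a b) as [c [Hc1 Hc2]]; [lra|auto|].
  rewrite H0 in Hc1 by lra; lra.
Qed.

Lemma const_where_pos_extend f f' S :
  (forall t, derivable_pt_lim f t (f' t)) -> (forall t, 0 < f t -> f' t = 0) ->
  0 < f 0 -> 0 <= S -> (forall r, 0 <= r <= S -> f r = f 0) ->
  exists d, 0 < d /\ forall r, 0 <= r <= S + d -> f r = f 0.
Proof.
  intros Hd Hz Hpos HS Hconst.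
  assert (Hcont : continuity_pt f S)
    by (apply derivable_continuous_pt; exists (f' S); apply Hd).
  destruct (continuity_pt_near f S (f 0) Hcont Hpos) as [d [Hd0 Hdd]].
  assert (Hposc : forall c, 0 <= c <= S + d / 2 -> 0 < f c).
  { intros c Hc; destruct (Rle_or_lt c S) as [Hcs|Hcs]; [rewrite Hconst by lra; auto|].
    assert (Hnear : Rabs (c - S) < d) by (apply Rabs_def1; lra).
    specialize (Hdd c Hnear); rewrite (Hconst S) in Hdd by lra; apply Rabs_def2 in Hdd; lra. }
  exists (d / 2); split; [lra|]; intros r Hr.
  apply (const_on_interval f f' 0 r); try lra; intros c Hc; auto.
  apply Hz, Hposc; lra.
Qed.

(* A supremum argument: the largest [S] such that [f] equals [f 0] on [[0, S]]
   cannot be finite, by continuity and [const_where_pos_extend]. *)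
Lemma const_where_pos_nonneg f f' :
  (forall t, derivable_pt_lim f t (f' t)) -> (forall t, 0 < f t -> f' t = 0) ->
  0 < f 0 -> forall t, 0 <= t -> f t = f 0.
Proof.
  intros Hd Hz Hpos t Ht; apply NNPP; intros Hne.
  set (E := fun s => 0 <= s /\ forall r, 0 <= r <= s -> f r = f 0).
  assert (E0 : E 0) by (split; [lra|]; intros r Hr; replace r with 0 by lra; auto).
  destruct (completeness E) as [S [HS1 HS2]].
  { exists t; intros s [Hs Hr]; apply Rnot_lt_le; intros Hts; apply Hne, Hr; lra. }
  { exists 0; auto. }
  assert (HS0 : 0 <= S) by (apply HS1; auto).
  assert (Hbelow : forall r, 0 <= r < S -> f r = f 0).
  { intros r Hr; apply NNPP; intros Hfr.
    assert (Hub : is_upper_bound E r).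
    { intros s [Hs Hsr]; apply Rnot_lt_le; intros Hrs; apply Hfr, Hsr; lra. }
    specialize (HS2 r Hub); lra. }
  assert (HfS : f S = f 0).
  { destruct (Req_dec S 0) as [->|HS0']; auto.
    apply NNPP; intros HneS.
    assert (Hcont : continuity_pt f S)
      by (apply derivable_continuous_pt; exists (f' S); apply Hd).
    destruct (continuity_pt_near f S (Rabs (f S - f 0)) Hcont) as [d [Hd0 Hdd]];
      [apply Rabs_pos_lt; lra|].
    set (r := Rmax 0 (S - d / 2)).
    assert (Hr : 0 <= r < S /\ Rabs (r - S) < d).
    { unfold r; pose proof (Rmax_l 0 (S - d / 2)); pose proof (Rmax_r 0 (S - d / 2)).
      split; [split; [lra|apply Rmax_lub_lt; lra]|apply Rabs_def1; apply Rmax_case_strong; lra]. }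
    specialize (Hdd r (proj2 Hr)); rewrite Hbelow, <- Rabs_Ropp in Hdd by apply Hr.
    replace (- (f 0 - f S)) with (f S - f 0) in Hdd by ring; lra. }
  destruct (const_where_pos_extend f f' S Hd Hz Hpos HS0) as [d [Hd0 Hext]].
  { intros r Hr; destruct (Req_dec r S) as [->|HrS]; [auto|apply Hbelow; lra]. }
  assert (HE : E (S + d)) by (split; [lra|auto]).
  specialize (HS1 _ HE); lra.
Qed.

Lemma const_where_pos f f' :
  (forall t, derivable_pt_lim f t (f' t)) -> (forall t, 0 < f t -> f' t = 0) ->
  0 < f 0 -> forall t, f t = f 0.
Proof.
  intros Hd Hz Hpos t; destruct (Rle_or_lt 0 t) as [Ht|Ht].
  - apply (const_where_pos_nonneg f f'); auto.
  - assert (Hmirr : forall s, derivable_pt_lim (fun s => f (- s)) s (- f' (- s))).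
    { intros s; apply derivable_pt_lim_mirr_fwd; rewrite Ropp_involutive; auto. }
    pose proof (const_where_pos_nonneg (fun s => f (- s)) (fun s => - f' (- s)) Hmirr)
      as Hc; cbv beta in Hc.
    rewrite Ropp_0 in Hc; rewrite <- (Ropp_involutive t), Hc; auto; try lra.
    intros s Hs; rewrite Hz; auto; ring.
Qed.

Lemma const_of_deriv0 f : (forall t, derivable_pt_lim f t 0) -> forall t, f t = f 0.
Proof.
  intros H t; destruct (Rle_or_lt 0 t) as [Ht|Ht].
  - apply (const_on_interval f (fun _ => 0)); auto.
  - symmetry; apply (const_on_interval f (fun _ => 0)); auto; lra.
Qed.

Lemma linear_ode1_zero f c : (forall t, derivable_pt_lim f t (c * f t)) -> f 0 = 0 ->
  forall t, f t = 0.
Proof.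
  intros Hd H0 t.
  assert (Hfe : forall s, derivable_pt_lim (fun s => f s * exp (- c * s)) s 0).
  { intros s; apply is_derive_Reals.
    assert (Hd' : is_derive f s (c * f s)) by (apply is_derive_Reals; auto).
    auto_derive; [eexists; eauto|].
    rewrite (is_derive_unique (fun x : R => f x) s _ Hd'); ring. }
  pose proof (const_of_deriv0 _ Hfe t) as Ht; cbv beta in Ht.
  rewrite H0, Rmult_0_l in Ht.
  apply Rmult_integral in Ht as [Ht|Ht]; auto.
  pose proof (exp_pos (- c * t)); lra.
Qed.

(* [e' - a e] solves [w' = - a w], then [e] solves [e' = a e]. *)
Lemma linear_ode2_zero e e1 e2 a :
  (forall t, derivable_pt_lim e t (e1 t)) -> (forall t, derivable_pt_lim e1 t (e2 t)) ->
  (forall t, e2 t = a ^ 2 * e t) -> e 0 = 0 -> e1 0 = 0 -> forall t, e t = 0.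
Proof.
  intros Hd Hd1 Hode H0 H1.
  assert (Hw : forall t, e1 t - a * e t = 0).
  { apply (linear_ode1_zero (fun t => e1 t - a * e t) (- a)); [|rewrite H0, H1; ring].
    intros t; eapply derivable_pt_lim_eq_val.
    - apply derivable_pt_lim_minus; [apply Hd1|apply derivable_pt_lim_scal, Hd].
    - rewrite Hode; ring. }
  apply (linear_ode1_zero e a); auto.
  intros t; eapply derivable_pt_lim_eq_val; [apply Hd|].
  specialize (Hw t); lra.
Qed.

Lemma cosh_sq_sub_sinh_sq x : cosh x ^ 2 - sinh x ^ 2 = 1.
Proof.
  unfold cosh, sinh; rewrite <- (exp_0), <- (Rplus_opp_r x), exp_plus; field.
Qed.

Lemma cosh_pos x : 0 < cosh x.
Proof. unfold cosh; pose proof (exp_pos x); pose proof (exp_pos (- x)); lra. Qed.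

Lemma cosh_sinh_param p q : 0 < p -> q ^ 2 < p ^ 2 ->
  exists c, sqrt (p ^ 2 - q ^ 2) * cosh c = p /\ sqrt (p ^ 2 - q ^ 2) * sinh c = q.
Proof.
  intros Hp Hq; set (s := sqrt (p ^ 2 - q ^ 2)).
  assert (Hs : 0 < s) by (apply sqrt_lt_R0; lra).
  assert (Hss : s * s = p ^ 2 - q ^ 2) by (apply sqrt_sqrt; lra).
  exists (arcsinh (q / s)); rewrite sinh_arcsinh; split; [|field; lra].
  pose proof (cosh_sq_sub_sinh_sq (arcsinh (q / s))) as H; rewrite sinh_arcsinh in H.
  pose proof (cosh_pos (arcsinh (q / s))).
  apply Rsqr_inj; unfold Rsqr; try nra.
  replace (p * p) with (s * s + q * q) by lra.
  replace (s * cosh (arcsinh (q / s)) * (s * cosh (arcsinh (q / s))))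
    with (s ^ 2 * cosh (arcsinh (q / s)) ^ 2) by ring.
  replace (cosh (arcsinh (q / s)) ^ 2) with (1 + (q / s) ^ 2) by lra.
  field; lra.
Qed.

Lemma derivable_pt_lim_cosh_affine A a c t :
  derivable_pt_lim (fun t => A * cosh (a * t - c)) t (A * a * sinh (a * t - c)).
Proof. apply is_derive_Reals; unfold cosh, sinh, Rminus; auto_derive; auto; field. Qed.

Lemma derivable_pt_lim_sinh_affine A a c t :
  derivable_pt_lim (fun t => A * sinh (a * t - c)) t (A * a * cosh (a * t - c)).
Proof. apply is_derive_Reals; unfold cosh, sinh, Rminus; auto_derive; auto; field. Qed.

Lemma cosh_of_linear_ode2 v v1 v2 a : a <> 0 ->
  (forall t, derivable_pt_lim v t (v1 t)) -> (forall t, derivable_pt_lim v1 t (v2 t)) ->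
  (forall t, v2 t = a ^ 2 * v t) -> 0 < v 0 -> (v1 0 / a) ^ 2 < v 0 ^ 2 ->
  exists c, forall t, v t = sqrt (v 0 ^ 2 - (v1 0 / a) ^ 2) * cosh (a * t - c).
Proof.
  intros Ha Hd Hd1 Hode Hv0 Hh.
  destruct (cosh_sinh_param (v 0) (v1 0 / a) Hv0 Hh) as [c [Hc Hs]].
  set (s := sqrt (v 0 ^ 2 - (v1 0 / a) ^ 2)) in *.
  exists (- c); intros t.
  enough (He : forall t, v t - s * cosh (a * t - - c) = 0) by (specialize (He t); lra).
  apply (linear_ode2_zero _ (fun t => v1 t - s * a * sinh (a * t - - c))
                            (fun t => v2 t - s * a * a * cosh (a * t - - c)) a).
  - intros; apply derivable_pt_lim_minus; auto using derivable_pt_lim_cosh_affine.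
  - intros; apply derivable_pt_lim_minus; auto using derivable_pt_lim_sinh_affine.
  - intros; rewrite Hode; ring.
  - replace (a * 0 - - c) with c by ring; lra.
  - replace (a * 0 - - c) with c by ring; rewrite Rmult_assoc, (Rmult_comm a), <- Rmult_assoc, Hs.
    field; auto.
Qed.

(** * Curvature of the metric [Phi(|x|^2) delta] *)

Definition rad_metric (n : nat) (Phi : R -> R) : metric :=
  fun y i j => if Nat.eqb i j then Phi (normsq n y) else 0.

(* [chris g0 x] are the Christoffel symbols of [rad_metric n Phi] when
   [g0 = Phi' / Phi] at [|x|^2], and [dchris g0 g1 x a] their [x^a]-derivatives
   when moreover [g1 = (Phi' / Phi)'] at [|x|^2]. *)
Definition chris (g0 : R) (x : vec) (m i j : nat) : R :=
  g0 * (kron j m * x i + kron i m * x j - kron i j * x m).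

Definition dchris (g0 g1 : R) (x : vec) (a m i j : nat) : R :=
  g1 * (2 * x a) * (kron j m * x i + kron i m * x j - kron i j * x m)
  + g0 * (kron j m * kron i a + kron i m * kron j a - kron i j * kron m a).

Section ChristoffelContractions.
Variables (n : nat) (x : vec) (g0 g1 : R) (i j : nat).
Hypotheses (Hi : (i < n)%nat) (Hj : (j < n)%nat).

Lemma sum_dchris_div :
  sumR n (fun m => dchris g0 g1 x m m i j)
  = 2 * g1 * (x j * x i + x i * x j - kron i j * normsq n x)
    + g0 * (2 * kron i j - kron i j * INR n).
Proof.
  unfold dchris.
  rewrite (sumR_ext _ _ (fun m => (2 * g1 * x i) * (kron j m * x m)
     + (2 * g1 * x j) * (kron i m * x m) - (2 * g1 * kron i j) * x m ^ 2
     + (2 * g0) * (kron j m * kron i m) - g0 * kron i j))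
    by (intros m _; rewrite kron_refl; ring).
  repeat rewrite ?sumR_sub, ?sumR_add, ?sumR_mull.
  rewrite sumR_const, !sumR_kron_l by auto.
  unfold normsq; ring.
Qed.

Lemma sum_dchris_trace :
  sumR n (fun m => dchris g0 g1 x j m i m) = INR n * (2 * g1 * x j * x i + g0 * kron i j).
Proof.
  unfold dchris.
  rewrite (sumR_ext _ _ (fun m => 2 * g1 * x j * x i + g0 * kron i j))
    by (intros m _; rewrite kron_refl; ring).
  apply sumR_const.
Qed.

Lemma sum_chris_trace_chris :
  sumR n (fun m => sumR n (fun l => chris g0 x m m l * chris g0 x l i j))
  = INR n * (g0 ^ 2 * (x i * x j + x j * x i - kron i j * normsq n x)).
Proof.
  unfold chris.
  rewrite (sumR_ext _ _ (fun _ => g0 ^ 2 * (x i * x j + x j * x i - kron i j * normsq n x)))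
    by (intros m Hm;
        rewrite (sumR_ext _ _ (fun l => (g0 ^ 2 * x i) * (kron j l * x l)
           + (g0 ^ 2 * x j) * (kron i l * x l) - (g0 ^ 2 * kron i j) * x l ^ 2))
          by (intros l _; rewrite kron_refl, (kron_sym m l); ring);
        repeat rewrite ?sumR_sub, ?sumR_add, ?sumR_mull;
        rewrite !sumR_kron_l by auto;
        unfold normsq; ring).
  apply sumR_const.
Qed.

Lemma sum_chris_cross_chris :
  sumR n (fun m => sumR n (fun l => chris g0 x m j l * chris g0 x l i m))
  = g0 ^ 2 * (INR n * (x i * x j) + 2 * (x i * x j) - 2 * kron i j * normsq n x).
Proof.
  unfold chris.
  rewrite (sumR_ext _ _ (fun m => g0 ^ 2 * (x i * x j) + (g0 ^ 2 * x i) * (kron j m * x m)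
     + (g0 ^ 2 * x j) * (kron i m * x m) - (g0 ^ 2 * normsq n x) * (kron j m * kron i m)
     - (g0 ^ 2 * kron i j) * x m ^ 2)).
  { repeat rewrite ?sumR_sub, ?sumR_add, ?sumR_mull.
    rewrite sumR_const, !sumR_kron_l by auto.
    unfold normsq; ring. }
  intros m Hm.
  rewrite (sumR_ext _ _ (fun l =>
       kron l m * (g0 ^ 2 * (x j * kron m l * x i + x j * kron i l * x m
                             - x j * kron i m * x l + kron j m * x l * x i))
     + kron i l * (g0 ^ 2 * (kron j m * x l * x m))
     + kron j l * (g0 ^ 2 * (- x m * kron m l * x i - x m * kron i l * x m
                             + x m * kron i m * x l))
     + (- g0 ^ 2 * kron j m * kron i m) * x l ^ 2))
    by (intros l _; rewrite (kron_sym m l); ring).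
  repeat rewrite ?sumR_add, ?sumR_mull.
  rewrite sumR_kron_r, !sumR_kron_l by auto.
  fold (normsq n x); rewrite kron_refl, (kron_sym m j); ring.
Qed.

End ChristoffelContractions.

Definition ric_xx (n : nat) (g0 g1 : R) : R := (INR n - 2) * (g0 ^ 2 - 2 * g1).

Definition ric_kron (n : nat) (g0 g1 N : R) : R :=
  - (2 * INR n - 2) * g0 - 2 * g1 * N - (INR n - 2) * g0 ^ 2 * N.

Definition schouten_kron (n : nat) (g0 g1 N : R) : R :=
  (ric_kron n g0 g1 N - (ric_xx n g0 g1 * N + INR n * ric_kron n g0 g1 N) / (2 * (INR n - 1)))
  / (INR n - 2).

Section RadialMetric.
Variables (n : nat) (Phi G G1 : R -> R).
Hypothesis Phi_pos : forall r, 0 < r -> 0 < Phi r.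
Hypothesis Phi_deriv : forall r, 0 < r -> derivable_pt_lim Phi r (Phi r * G r).
Hypothesis G_deriv : forall r, 0 < r -> derivable_pt_lim G r (G1 r).

Let g := rad_metric n Phi.

Lemma rad_metricE y i j : g y i j = kron i j * Phi (normsq n y).
Proof. unfold g, rad_metric, kron; destruct (Nat.eqb i j); ring. Qed.

Lemma pd_rad_metric x l i j : (l < n)%nat -> 0 < normsq n x ->
  pd l (fun y => g y i j) x
  = kron i j * (Phi (normsq n x) * G (normsq n x) * (2 * x l)).
Proof.
  intros Hl Hx; unfold pd; apply der_lim.
  apply (derivable_pt_lim_ext (fun s => kron i j * Phi (normsq n (upd x l s))));
    [intros; symmetry; apply rad_metricE|].
  apply derivable_pt_lim_scal, derivable_pt_lim_radial; auto.
Qed.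

Lemma minv_rad_metric x m l : (m < n)%nat -> (l < n)%nat -> 0 < normsq n x ->
  minv n (g x) m l = kron m l / Phi (normsq n x).
Proof. intros; apply minv_scalar; auto; apply Rgt_not_eq, Phi_pos; auto. Qed.

Lemma Gam_rad_metric x m i j : (m < n)%nat -> (i < n)%nat -> (j < n)%nat ->
  0 < normsq n x -> Gam n g x m i j = chris (G (normsq n x)) x m i j.
Proof.
  intros Hm Hi Hj Hx; unfold Gam, chris.
  assert (HP : 0 < Phi (normsq n x)) by auto.
  rewrite (sumR_ext _ _ (fun l => kron m l * (/ Phi (normsq n x) *
       (kron j l * (Phi (normsq n x) * G (normsq n x) * (2 * x i))
        + kron i l * (Phi (normsq n x) * G (normsq n x) * (2 * x j))
        - kron i j * (Phi (normsq n x) * G (normsq n x) * (2 * x l)))))).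
  - rewrite sumR_kron_l by auto; field; lra.
  - intros l Hl; rewrite minv_rad_metric, !pd_rad_metric by auto; unfold Rdiv; ring.
Qed.

Lemma pd_Gam_rad_metric x a m i j :
  (a < n)%nat -> (m < n)%nat -> (i < n)%nat -> (j < n)%nat -> 0 < normsq n x ->
  pd a (fun y => Gam n g y m i j) x = dchris (G (normsq n x)) (G1 (normsq n x)) x a m i j.
Proof.
  intros Ha Hm Hi Hj Hx; unfold pd; apply der_lim.
  destruct (normsq_upd_pos_near n x a Ha Hx) as [d [Hd Hnear]].
  apply (derivable_pt_lim_locally_ext
           (fun s => chris (G (normsq n (upd x a s))) (upd x a s) m i j) _ _
           (x a - d) (x a + d)); [lra| |].
  { intros s Hs; symmetry; apply Gam_rad_metric, Hnear; auto.
    apply Rabs_def1; lra. }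
  unfold chris, dchris; eapply derivable_pt_lim_eq_val.
  - apply (derivable_pt_lim_mult (fun s => G (normsq n (upd x a s)))
             (fun s => kron j m * upd x a s i + kron i m * upd x a s j
                       - kron i j * upd x a s m)).
    + apply derivable_pt_lim_radial; auto.
    + apply derivable_pt_lim_minus; [apply derivable_pt_lim_plus|];
        apply derivable_pt_lim_scal, derivable_pt_lim_upd.
  - rewrite upd_id; ring.
Qed.

Lemma Ric_rad_metric x i j : (i < n)%nat -> (j < n)%nat -> 0 < normsq n x ->
  Ric n g x i j = ric_xx n (G (normsq n x)) (G1 (normsq n x)) * x i * x j
                  + kron i j * ric_kron n (G (normsq n x)) (G1 (normsq n x)) (normsq n x).
Proof.
  intros Hi Hj Hx; unfold Ric.
  set (g0 := G (normsq n x)); set (g1 := G1 (normsq n x)).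
  rewrite (sumR_ext _ _ (fun m => dchris g0 g1 x m m i j - dchris g0 g1 x j m i m
     + (sumR n (fun l => chris g0 x m m l * chris g0 x l i j)
        - sumR n (fun l => chris g0 x m j l * chris g0 x l i m)))).
  - rewrite sumR_add, !sumR_sub, sum_dchris_div, sum_dchris_trace,
      sum_chris_trace_chris, sum_chris_cross_chris by auto.
    unfold ric_xx, ric_kron; ring.
  - intros m Hm; rewrite !pd_Gam_rad_metric, <- sumR_sub by auto; f_equal.
    apply sumR_ext; intros l Hl; rewrite !Gam_rad_metric by auto; reflexivity.
Qed.

Lemma Scal_rad_metric x : 0 < normsq n x ->
  Scal n g x = (ric_xx n (G (normsq n x)) (G1 (normsq n x)) * normsq n x
                + INR n * ric_kron n (G (normsq n x)) (G1 (normsq n x)) (normsq n x))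
               / Phi (normsq n x).
Proof.
  intros Hx; unfold Scal.
  rewrite (sumR_ext _ _ (fun i => / Phi (normsq n x) *
     (ric_xx n (G (normsq n x)) (G1 (normsq n x)) * x i ^ 2
      + ric_kron n (G (normsq n x)) (G1 (normsq n x)) (normsq n x)))).
  - rewrite sumR_mull, sumR_add, sumR_mull, sumR_const; unfold normsq, Rdiv; ring.
  - intros i Hi.
    rewrite (sumR_ext _ _ (fun j => kron i j * (/ Phi (normsq n x) * Ric n g x i j)))
      by (intros j Hj; rewrite minv_rad_metric by auto; unfold Rdiv; ring).
    rewrite sumR_kron_l, Ric_rad_metric, kron_refl by auto; ring.
Qed.

Lemma minv_Schouten_rad_metric x i j : (3 <= n)%nat ->
  (i < n)%nat -> (j < n)%nat -> 0 < normsq n x ->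
  sumR n (fun l => minv n (g x) i l * Schouten n g x l j)
  = ((if Nat.eqb i j then schouten_kron n (G (normsq n x)) (G1 (normsq n x)) (normsq n x)
      else 0)
     + ric_xx n (G (normsq n x)) (G1 (normsq n x)) / (INR n - 2) * x i * x j)
    / Phi (normsq n x).
Proof.
  intros Hn Hi Hj Hx.
  assert (HP : 0 < Phi (normsq n x)) by auto.
  assert (Hn3 : 3 <= INR n) by (replace 3 with (INR 3) by (simpl; ring); apply le_INR; auto).
  rewrite (sumR_ext _ _ (fun l => kron i l * (/ Phi (normsq n x) * Schouten n g x l j)))
    by (intros l Hl; rewrite minv_rad_metric by auto; unfold Rdiv; ring).
  rewrite sumR_kron_l by auto; unfold Schouten.
  rewrite Ric_rad_metric, Scal_rad_metric, rad_metricE by auto.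
  unfold schouten_kron, kron; destruct (Nat.eqb i j); field; repeat split; lra.
Qed.

End RadialMetric.

Definition alpha (n k : nat) : R := (INR n - 2 * INR k) / (2 * INR k).

Lemma INR_k_ge1 k : (1 <= k)%nat -> 1 <= INR k.
Proof. apply (le_INR 1). Qed.

Lemma INR_2k_lt_n n k : (2 * k < n)%nat -> 2 * INR k < INR n.
Proof. intros; rewrite <- (mult_INR 2); apply lt_INR; auto. Qed.

Lemma alpha_pos n k : (1 <= k)%nat -> (2 * k < n)%nat -> 0 < alpha n k.
Proof.
  intros Hk Hkn; pose proof (INR_k_ge1 k Hk); pose proof (INR_2k_lt_n n k Hkn).
  unfold alpha; apply Rdiv_lt_0_compat; lra.
Qed.

Definition cyl_factor (n k : nat) (v : R -> R) (r : R) : R :=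
  Rpower (v (ln (sqrt r))) (4 * INR k / (INR n - 2 * INR k)) * / r.

(* [Phi'/Phi] and [(Phi'/Phi)'] at [r = N] for [Phi = cyl_factor n k v], in terms of
   [V = v t], [V1 = v' t], [V2 = v'' t] with [t = ln (sqrt N)] and [a = alpha n k]. *)
Definition cyl_g0 (a V V1 N : R) : R := (V1 / (a * V) - 1) / N.

Definition cyl_g1 (a V V1 V2 N : R) : R :=
  ((V2 * V - V1 ^ 2) / (2 * a * V ^ 2) - (V1 / (a * V) - 1)) / N ^ 2.

Definition cyl_logder (n k : nat) (v v1 : R -> R) (r : R) : R :=
  cyl_g0 (alpha n k) (v (ln (sqrt r))) (v1 (ln (sqrt r))) r.

Definition cyl_logder' (n k : nat) (v v1 v2 : R -> R) (r : R) : R :=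
  cyl_g1 (alpha n k) (v (ln (sqrt r))) (v1 (ln (sqrt r))) (v2 (ln (sqrt r))) r.

Lemma gv_rad_metric n k v : gv n k v = rad_metric n (cyl_factor n k v).
Proof.
  do 3 (apply functional_extensionality; intros).
  unfold gv, rad_metric, gcyl, cyl_factor, tcoord; destruct (Nat.eqb _ _); ring.
Qed.

Section CylFactor.
Variables (n k : nat) (v v1 v2 : R -> R).
Hypothesis Hk : (1 <= k)%nat.
Hypothesis Hkn : (2 * k < n)%nat.
Hypothesis v_pos : forall t, 0 < v t.
Hypothesis v_deriv : forall t, derivable_pt_lim v t (v1 t).
Hypothesis v1_deriv : forall t, derivable_pt_lim v1 t (v2 t).

Lemma cyl_factor_pos r : 0 < r -> 0 < cyl_factor n k v r.
Proof.
  intros Hr; unfold cyl_factor, Rpower.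
  apply Rmult_lt_0_compat; [apply exp_pos|apply Rinv_0_lt_compat; auto].
Qed.

Lemma cyl_factor_deriv r : 0 < r ->
  derivable_pt_lim (cyl_factor n k v) r (cyl_factor n k v r * cyl_logder n k v v1 r).
Proof.
  intros Hr; apply is_derive_Reals.
  assert (Hd : forall t, is_derive v t (v1 t)) by (intros; apply is_derive_Reals; auto).
  pose proof (INR_k_ge1 k Hk); pose proof (INR_2k_lt_n n k Hkn).
  assert (Hs0 : 0 < sqrt r) by (apply sqrt_lt_R0; auto).
  unfold cyl_factor, cyl_logder, cyl_g0, alpha, Rpower; auto_derive.
  - repeat split; auto; [eexists; apply Hd|lra].
  - rewrite (is_derive_unique _ _ _ (Hd _)).
    specialize (v_pos (ln (sqrt r))).
    set (V := v _) in *; set (V1 := v1 _); set (E := exp _); set (s := sqrt r) in *.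
    rewrite <- (sqrt_sqrt r) by lra; fold s.
    field; repeat split; lra.
Qed.

Lemma cyl_logder_deriv r : 0 < r ->
  derivable_pt_lim (cyl_logder n k v v1) r (cyl_logder' n k v v1 v2 r).
Proof.
  intros Hr; apply is_derive_Reals.
  assert (Hd : forall t, is_derive v t (v1 t)) by (intros; apply is_derive_Reals; auto).
  assert (Hd1 : forall t, is_derive v1 t (v2 t)) by (intros; apply is_derive_Reals; auto).
  pose proof (alpha_pos n k Hk Hkn).
  assert (Hs0 : 0 < sqrt r) by (apply sqrt_lt_R0; auto).
  specialize (v_pos (ln (sqrt r))).
  unfold cyl_logder, cyl_logder', cyl_g0, cyl_g1; auto_derive.
  - repeat split; try lra; try (eexists; apply Hd1); try (eexists; apply Hd).
    apply Rgt_not_eq, Rmult_lt_0_compat; auto.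
  - rewrite (is_derive_unique (fun t => v t) _ _ (Hd _)),
      (is_derive_unique (fun t => v1 t) _ _ (Hd1 _)).
    set (V := v _) in *; set (V1 := v1 _); set (V2 := v2 _); set (s := sqrt r) in *.
    rewrite <- (sqrt_sqrt r) by lra; fold s.
    field; repeat split; lra.
Qed.

End CylFactor.

Section CylAlgebra.
Variables (n k : nat) (N V V1 V2 : R).
Hypotheses (Hk : (1 <= k)%nat) (Hkn : (2 * k < n)%nat) (HN : 0 < N) (HV : 0 < V).

Let g0 := cyl_g0 (alpha n k) V V1 N.
Let g1 := cyl_g1 (alpha n k) V V1 V2 N.

Lemma cyl_schouten_kron :
  alpha n k * V ^ 2 * N * schouten_kron n g0 g1 N
  = alpha n k * (V ^ 2 - (V1 / alpha n k) ^ 2) / 2.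
Proof.
  pose proof (INR_k_ge1 k Hk); pose proof (INR_2k_lt_n n k Hkn).
  unfold g0, g1, cyl_g0, cyl_g1, schouten_kron, ric_kron, ric_xx, alpha.
  field; repeat split; lra.
Qed.

Lemma cyl_schouten_trace :
  INR n / INR k * (alpha n k * (V ^ 2 - (V1 / alpha n k) ^ 2) / 2)
  + alpha n k * V ^ 2 * N * (ric_xx n g0 g1 / (INR n - 2)) * N
  = V * (alpha n k ^ 2 * V - V2).
Proof.
  pose proof (INR_k_ge1 k Hk); pose proof (INR_2k_lt_n n k Hkn).
  unfold g0, g1, cyl_g0, cyl_g1, ric_xx, alpha; field; repeat split; lra.
Qed.

End CylAlgebra.

Lemma Rpower_cyl_exponent n k V : (2 * k < n)%nat -> 0 < V ->
  Rpower V (2 * INR n / (INR n - 2 * INR k))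
  = Rpower V (4 * INR k / (INR n - 2 * INR k)) * V ^ 2.
Proof.
  intros Hkn HV; pose proof (INR_2k_lt_n n k Hkn).
  rewrite <- Rpower_pow, <- Rpower_plus by auto; f_equal; simpl; field; lra.
Qed.

Theorem sigmak_Bv n k v v1 v2 x : (1 <= k)%nat -> (2 * k < n)%nat ->
  (forall t, 0 < v t) -> (forall t, derivable_pt_lim v t (v1 t)) ->
  (forall t, derivable_pt_lim v1 t (v2 t)) -> 0 < normsq n x ->
  let t := tcoord n x in
  0 < v t ^ 2 - (v1 t / alpha n k) ^ 2 ->
  sigmak n k (Bv n k v x)
  = (alpha n k * (v t ^ 2 - (v1 t / alpha n k) ^ 2) / 2) ^ pred k
    * INR (binomial.binomial (pred n) (pred k)) * (v t * (alpha n k ^ 2 * v t - v2 t)).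
Proof.
  intros Hk Hkn Hv Hd Hd1 Hx t Hh.
  pose proof (alpha_pos n k Hk Hkn) as Ha.
  set (N := normsq n x) in *.
  set (Lam := alpha n k * (v t ^ 2 - (v1 t / alpha n k) ^ 2) / 2).
  set (Mu := alpha n k * v t ^ 2 * N
             * (ric_xx n (cyl_g0 (alpha n k) (v t) (v1 t) N)
                  (cyl_g1 (alpha n k) (v t) (v1 t) (v2 t) N) / (INR n - 2))).
  assert (HLam : Lam <> 0) by (apply Rgt_not_eq; unfold Lam; apply Rdiv_lt_0_compat;
                               [apply Rmult_lt_0_compat|]; lra).
  rewrite (sigmak_ext n k _ (fun i j => (if Nat.eqb i j then Lam else 0) + Mu * x i * x j)).
  - rewrite sigmak_scalar_rank1, MatrixDet.INR_binomial_diag by (assumption || lia).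
    change (sumR n (fun i => x i ^ 2)) with N.
    rewrite <- (cyl_schouten_trace n k N (v t) (v1 t) (v2 t)) by auto.
    fold Lam; unfold Mu.
    destruct k as [|k]; [lia|]; cbn [pred]; simpl pow; ring.
  - intros i j Hi Hj; unfold Bv.
    rewrite gv_rad_metric, (minv_Schouten_rad_metric n _ (cyl_logder n k v v1)
      (cyl_logder' n k v v1 v2)); auto using cyl_factor_pos, cyl_factor_deriv, cyl_logder_deriv.
    2: lia.
    unfold cyl_logder, cyl_logder', cyl_factor, Lam, Mu; fold N (alpha n k).
    change (ln (sqrt N)) with t; change (tcoord n x) with t.
    rewrite Rpower_cyl_exponent, <- (cyl_schouten_kron n k N (v t) (v1 t) (v2 t)) by auto.
    assert (HR : 0 < Rpower (v t) (4 * INR k / (INR n - 2 * INR k))) by apply exp_pos.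
    pose proof (INR_2k_lt_n n k Hkn); pose proof (INR_k_ge1 k Hk).
    destruct (Nat.eqb i j); field; repeat split; lra.
Qed.

(** * The equation [sigma_k(B_{g_v}) = 0] *)

Lemma tcoord_surj n t : (1 <= n)%nat -> exists x, 0 < normsq n x /\ tcoord n x = t.
Proof.
  intros Hn; exists (fun i => if Nat.eqb i 0 then exp t else 0).
  assert (HN : normsq n (fun i => if Nat.eqb i 0 then exp t else 0) = exp t ^ 2).
  { unfold normsq; destruct n as [|n]; [lia|].
    rewrite sumR_recl, (sumR_ext _ _ (fun _ => 0)), sumR_const by (intros; simpl; ring).
    simpl; ring. }
  unfold tcoord; rewrite HN, sqrt_pow2, ln_exp by (left; apply exp_pos).
  split; auto; pose proof (exp_pos t); nra.
Qed.

Section CylEquation.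
Variables (n k : nat) (v v1 v2 : R -> R).
Hypothesis Hk : (1 <= k)%nat.
Hypothesis Hkn : (2 * k < n)%nat.
Hypothesis v_pos : forall t, 0 < v t.
Hypothesis v_deriv : forall t, derivable_pt_lim v t (v1 t).
Hypothesis v1_deriv : forall t, derivable_pt_lim v1 t (v2 t).

Let a := alpha n k.
Let h t := v t ^ 2 - (v1 t / a) ^ 2.

Lemma hfun_eq t : hfun n k v t = h t.
Proof.
  pose proof (INR_k_ge1 k Hk); pose proof (INR_2k_lt_n n k Hkn).
  unfold hfun, h, a, alpha; rewrite (der_lim _ _ _ (v_deriv t)); field; lra.
Qed.

Lemma sigmak_Bv_eq0 x : 0 < normsq n x -> 0 < h (tcoord n x) ->
  sigmak n k (Bv n k v x) = 0 <-> v2 (tcoord n x) = a ^ 2 * v (tcoord n x).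
Proof.
  intros Hx Hh; pose proof (alpha_pos n k Hk Hkn : 0 < a) as Ha.
  rewrite (sigmak_Bv n k v v1 v2 x) by auto; fold a (h (tcoord n x)).
  assert (Hbin : 0 < INR (binomial.binomial (pred n) (pred k)))
    by (apply lt_0_INR, MatrixDet.binomial_gt0; lia).
  assert (Hpow : 0 < (a * h (tcoord n x) / 2) ^ pred k)
    by (apply pow_lt; pose proof (Rmult_lt_0_compat _ _ Ha Hh); lra).
  pose proof (v_pos (tcoord n x)) as Hv.
  split; intros H.
  - apply Rmult_integral in H as [H|H].
    + pose proof (Rmult_lt_0_compat _ _ Hpow Hbin); lra.
    + apply Rmult_integral in H as [H|H]; lra.
  - rewrite H, Rminus_diag; ring.
Qed.

Lemma derivable_pt_lim_h t :
  derivable_pt_lim h t (2 * v1 t * (v t - v2 t / a ^ 2)).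
Proof.
  pose proof (alpha_pos n k Hk Hkn : 0 < a) as Ha.
  apply is_derive_Reals.
  assert (Hd : forall t, is_derive v t (v1 t)) by (intros; apply is_derive_Reals; auto).
  assert (Hd1 : forall t, is_derive v1 t (v2 t)) by (intros; apply is_derive_Reals; auto).
  unfold h; auto_derive.
  - repeat split; eexists; eauto.
  - rewrite (is_derive_unique (fun x : R => v x) t _ (Hd t)),
      (is_derive_unique (fun x : R => v1 x) t _ (Hd1 t)); field; lra.
Qed.

Lemma sigmak_zero_iff_cosh : 0 < h 0 ->
  (forall x, 0 < normsq n x -> sigmak n k (Bv n k v x) = 0)
  <-> exists c, forall t, v t = sqrt (h 0) * cosh (a * t - c).
Proof.
  intros Hh0; pose proof (alpha_pos n k Hk Hkn : 0 < a) as Ha.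
  split.
  - intros Hs.
    assert (Hode_pos : forall t, 0 < h t -> v2 t = a ^ 2 * v t).
    { intros t Ht; destruct (tcoord_surj n t) as [x [Hx <-]]; [lia|].
      apply sigmak_Bv_eq0; auto. }
    assert (Hh : forall t, h t = h 0).
    { apply (const_where_pos h _ derivable_pt_lim_h); auto.
      intros t Ht; rewrite Hode_pos by auto; field; lra. }
    apply cosh_of_linear_ode2 with v2; try lra; auto.
    + intros t; apply Hode_pos; rewrite Hh; auto.
    + unfold h in Hh0; lra.
  - intros [c Hc] x Hx.
    assert (Hv1 : forall t, v1 t = sqrt (h 0) * a * sinh (a * t - c)).
    { intros t; apply (uniqueness_limite v t); auto.
      rewrite (functional_extensionality _ _ Hc); apply derivable_pt_lim_cosh_affine. }
    assert (Hv2 : forall t, v2 t = sqrt (h 0) * a * a * cosh (a * t - c)).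
    { intros t; apply (uniqueness_limite v1 t); auto.
      rewrite (functional_extensionality _ _ Hv1); apply derivable_pt_lim_sinh_affine. }
    assert (Hht : forall t, h t = h 0).
    { intros t; unfold h at 1; rewrite Hc, Hv1.
      transitivity (sqrt (h 0) * sqrt (h 0)
                    * (cosh (a * t - c) ^ 2 - sinh (a * t - c) ^ 2)); [field; lra|].
      rewrite cosh_sq_sub_sinh_sq, sqrt_sqrt by lra; ring. }
    apply sigmak_Bv_eq0; auto.
    + rewrite Hht; auto.
    + rewrite Hv2, Hc; ring.
Qed.

End CylEquation.

Theorem proposition2p1 (n k : nat) (v : R -> R)
  (hk : (1 <= k)%nat) (hkn : (2 * k < n)%nat)
  (hsmooth : smooth v) (hpos : forall t, 0 < v t)
  (hh0 : 0 < hfun n k v 0) :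
  (forall x : vec, 0 < normsq n x -> sigmak n k (Bv n k v x) = 0) <->
  exists c : R, forall t : R,
    v t = sqrt (hfun n k v 0)
          * cosh ((INR n - 2 * INR k) / (2 * INR k) * t - c).
Proof.
  destruct hsmooth as [D [HD0 HD]].
  assert (Hd : forall t, derivable_pt_lim v t (D 1%nat t)) by (rewrite <- HD0; apply HD).
  rewrite hfun_eq with (v1 := D 1%nat) in * by auto.
  apply (sigmak_zero_iff_cosh n k v (D 1%nat) (D 2%nat)); auto.
Qed.
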